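(* Let $\mathbf{A}=\mathcal{A}_1\parallel\cdots\parallel\mathcal{A}_n$ be a parallel composition of finite labelled transition systems. Every infinite chain $e_1<e_2<e_3<\cdots$ of events of a branching process of $\mathbf{A}$ contains a subchain $e_{i_1}\ll e_{i_2}\ll e_{i_3}\ll\cdots$ (with $i_1<i_2<\cdots$) in which consecutive events are related by the strong causal relation.
   Context: A labelled transition system (LTS) is $\mathcal{A}=(\Sigma,S,T,\lambda,s^0)$ with finite actions $\Sigma$, finite states $S$, $T\subseteq S\times S$, $\lambda:T\to\Sigma$, initial $s^0$. For $\mathcal{A}_j=(\Sigma_j,S_j,T_j,\lambda_j,s^0_j)$, the parallel composition has global states in $S_1\times\cdots\times S_n$, initial state $(s^0_1,\dots,s^0_n)$, and global transitions $\mathbf{t}=(t_1,\dots,t_n)\neq(\star,\dots,\star)$ with label $a$, where $t_j$ is an $a$-transition of $\mathcal{A}_j$ if $a\in\Sigma_j$ and $t_j=\star$ otherwise ($\mathcal{A}_j$ participates iff $t_j\ne\star$); ${}^\bullet\mathbf{t}$ / $\mathbf{t}^\bullet$ are the sets of source / target states of the $t_j\neq\star$. Branching processes of $\mathbf{A}$ are Petri nets with conditions labelled by local states and events labelled by global transitions, defined inductively: the net with conditions $b^0_1,\dots,b^0_n$ labelled $s^0_1,\dots,s^0_n$ and no events is one; if a reachable marking of a branching process contains a set $M$ of conditions labelled exactly by ${}^\bullet\mathbf{t}$ and there is no event labelled $\mathbf{t}$ with input set $M$, adding an event $e$ labelled $\mathbf{t}$ with inputs $M$ and a fresh output condition for each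 state of $\mathbf{t}^\bullet$ (labelled by it) gives a branching process; arbitrary branching processes are (countable) unions of such. For nodes $x,y$, $x<y$ means there is a nonempty directed arc path from $x$ to $y$. For an event $e$, $[e]=\{e':e'\le e\}$ and $M(e)$ is the marking (set of conditions) reached by firing exactly the events of $[e]$ from the initial marking. Event $e'$ is a strong cause of event $e$, written $e'\ll e$, if $e'<e$ and $b'<b$ for every $b\in M(e)\setminus M(e')$ and every $b'\in M(e')\setminus M(e)$. *)

From mathcomp Require Import all_boot.
From Stdlib Require Import Relations.
Set Implicit Arguments. Unset Strict Implicit. Unset Printing Implicit Defensive.

(** * Labelled transition systems  A = (Sigma, S, T, lambda, s0)
    Actions of all components are drawn from a common finite type [Act];
    [sig] is the finite action set Sigma of the LTS. *)
Record LTS (Act : finType) := {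
  st : finType;
  sig : {set Act};
  tr : {set st * st};
  lab : st * st -> Act;                           (* lambda (relevant on T) *)
  lab_in : forall t, t \in tr -> lab t \in sig;
  init : st
}.

Section BP.
Variables (Act : finType) (n : nat) (A : 'I_n -> LTS Act).

(** A (candidate) global transition with label [a]: for each component j,
    [Some t_j] (an a-transition of A_j) or [None] (standing for the star). *)
Definition gtr := forall j : 'I_n, option (st (A j) * st (A j)).

Definition is_gtrans (a : Act) (t : gtr) : Prop :=
  (exists j, t j <> None) /\
  forall j, if a \in sig (A j)
            then exists tj, t j = Some tj /\ tj \in tr (A j) /\ lab tj = a
            else t j = None.

(** Branching processes are represented by the sequence of extension steps
    that builds them: step k either adds nothing ([None]) or adds event
    number k ([Some x]).  Nodes are named canonically:
    - condition [(None, j)] : the initial condition b0_j (labelled s0_j);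
    - condition [(Some k, j)] : the output condition of event k for the
      participating component j (labelled by the target state of t_j);
    - event k.
    For an event [x], [ev_pre x j] names the input condition of component j
    (only meaningful when j participates): input condition [(ev_pre x j, j)]. *)
Record event := {
  ev_act : Act;
  ev_tr : gtr;
  ev_pre : 'I_n -> option nat
}.

Definition cond := (option nat * 'I_n)%type.
Definition node := (cond + nat)%type.

Definition init_mark (c : cond) : Prop := c.1 = None.

Section Net.
Variable X : nat -> option event.

Definition is_event (k : nat) : Prop := exists x, X k = Some x.

Definition pre (k : nat) (c : cond) : Prop :=
  exists x, X k = Some x /\ ev_tr x c.2 <> None /\ ev_pre x c.2 = c.1.

Definition post (k : nat) (c : cond) : Prop :=
  c.1 = Some k /\ exists x, X k = Some x /\ ev_tr x c.2 <> None.

Inductive fires : (cond -> Prop) -> seq nat -> (cond -> Prop) -> Prop :=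
| fires_nil M : fires M [::] M
| fires_cons M k s M' :
    is_event k -> (forall c, pre k c -> M c) ->
    fires (fun c => (M c /\ ~ pre k c) \/ post k c) s M' ->
    fires M (k :: s) M'.

Definition reachable_before (k : nat) (M : cond -> Prop) : Prop :=
  exists s, (forall k', k' \in s -> k' < k) /\ fires init_mark s M.

Definition valid_step (k : nat) (x : event) : Prop :=
  [/\ is_gtrans (ev_act x) (ev_tr x),
      (* the input conditions are labelled exactly by the source states *)
      (forall j t, ev_tr x j = Some t ->
         match ev_pre x j with
         | None => t.1 = init (A j)
         | Some k' => k' < k /\ exists x' t', X k' = Some x' /\
                        ev_tr x' j = Some t' /\ t'.2 = t.1
         end),
      (exists M, reachable_before k M /\ forall c, pre k c -> M c) &
      (forall k' x', k' < k -> X k' = Some x' ->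
         ~ [/\ ev_act x' = ev_act x, (forall j, ev_tr x' j = ev_tr x j) &
               (forall c, pre k' c <-> pre k c)])].

Definition is_branching_process : Prop :=
  forall k x, X k = Some x -> valid_step k x.

Definition arc (u v : node) : Prop :=
  match u, v with
  | inl c, inr k => pre k c
  | inr k, inl c => post k c
  | _, _ => False
  end.

Definition node_lt : node -> node -> Prop := clos_trans node arc.

Definition ev_lt (e' e : nat) : Prop := node_lt (inr e') (inr e).
Definition ev_le (e' e : nat) : Prop := e' = e \/ ev_lt e' e.

Definition marking_of (e : nat) (M : cond -> Prop) : Prop :=
  exists s, uniq s /\ (forall k, k \in s <-> ev_le k e) /\ fires init_mark s M.

Definition strong_cause (e' e : nat) : Prop :=
  ev_lt e' e /\
  forall M M', marking_of e M -> marking_of e' M' ->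
    forall b b', M b -> ~ M' b -> M' b' -> ~ M b' ->
      node_lt (inl b') (inl b).

End Net.
End BP.

(* The marking M(e) consists of the conditions produced inside [e] and not
   consumed inside it; an invariant of firing sequences shows that it holds
   exactly one condition per component, and that a condition of M(e) lies
   above every event of [e] of its component.
   Call a component often changing if its condition in M(f i) changes for
   infinitely many i; beyond some index N the other components never change.
   For i >= N pick K so large that every often-changing condition of M(f i)
   is consumed below f K, then m1 so large that every component whose
   condition ever lies above f K already does so in M(f m1).  All often
   changing components do: otherwise their condition would be frozen from m1
   on.  Hence every b' in M(f i) \ M(f m1) lies below f K and every b in
   M(f m1) \ M(f i) lies above it, so f i << f m1; iterating yields the
   subchain. *)

From Pilot Require Import Defs.
From mathcomp Require Import all_boot.
From Stdlib Require Import Relations Classical ClassicalEpsilon.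
Set Implicit Arguments. Unset Strict Implicit. Unset Printing Implicit Defensive.

Lemma finite_upper_bound (I : finType) (P : I -> nat -> Prop) :
  (forall i, exists N, P i N) -> (forall i N N', N <= N' -> P i N -> P i N') ->
  exists N, forall i, P i N.
Proof.
move=> Hex Hmono.
suff [N HN] : exists N, forall i, i \in enum I -> P i N.
  by exists N => i; apply: HN; rewrite mem_enum.
elim: (enum I) => [|i s [N2 IH]]; first by exists 0.
have [N1 H1] := Hex i; exists (maxn N1 N2) => i'; rewrite inE => /orP [/eqP ->|i's].
  by apply: Hmono H1; rewrite leq_maxl.
by apply: Hmono (IH _ i's); rewrite leq_maxr.
Qed.

Lemma increasing_chain (R : nat -> nat -> Prop) N :
  (forall i, N <= i -> exists i', i < i' /\ R i i') ->
  exists g : nat -> nat, (forall m, g m < g m.+1) /\ forall m, R (g m) (g m.+1).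
Proof.
move=> H.
have H' i : exists i', N <= i -> i < i' /\ R i i'.
  by case: (leqP N i) => [/H [i' Hi]|_]; [exists i' | exists 0].
pose next i := proj1_sig (constructive_indefinite_description _ (H' i)).
have nextP i : N <= i -> i < next i /\ R i (next i).
  by rewrite /next; case: (constructive_indefinite_description _ _).
pose g m := iter m next N.
have gN m : N <= g m by elim: m => [|m IH] //=; apply: leq_trans IH (ltnW (nextP _ IH).1).
by exists g; split=> m; [exact: (nextP _ (gN m)).1 | exact: (nextP _ (gN m)).2].
Qed.

Section BranchingProcess.
Variables (Act : finType) (n : nat) (A : 'I_n -> LTS Act) (X : nat -> option (event A)).
Hypothesis HBP : is_branching_process X.

Definition participates (k : nat) (j : 'I_n) := exists x, X k = Some x /\ ev_tr x j <> None.

Definition produced_after (e : nat) (c : cond n) := exists g, c.1 = Some g /\ ev_le X e g.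

Lemma cond_ext (c c' : cond n) : c.1 = c'.1 -> c.2 = c'.2 -> c = c'.
Proof. by case: c c' => [a b] [a' b'] /= -> ->. Qed.

Lemma post_fst k c : post X k c -> c.1 = Some k.
Proof. by case. Qed.

Lemma pre_participates k c : pre X k c -> participates k c.2.
Proof. by case=> x [? [? ?]]; exists x. Qed.

Lemma post_participates k c : post X k c -> participates k c.2.
Proof. by case=> _ [x [? ?]]; exists x. Qed.

Lemma participates_pre k j : participates k j -> exists c, pre X k c /\ c.2 = j.
Proof. by case=> x [Xk Ht]; exists (ev_pre x j, j); split=> //; exists x. Qed.

Lemma participates_post k j : participates k j -> post X k (Some k, j).
Proof. by case=> x [Xk Ht]; split=> //; exists x. Qed.

Lemma pre_origin k c : pre X k c ->
  c.1 = None \/ exists q, c.1 = Some q /\ q < k /\ post X q c.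
Proof.
case: c => [o j] [x [Xk [Ht Hp]]] /=; simpl in Ht, Hp.
have [_ Hsrc _ _] := HBP Xk.
case Et: (ev_tr x j) Ht => [t|] // _.
move: (Hsrc _ _ Et); rewrite Hp; case: o {Hp} => [q|]; last by left.
move=> [qk [x' [t' [Xq [Et' _]]]]]; right; exists q; do 2 split=> //.
by split=> //; exists x'; rewrite Et'.
Qed.

Lemma node_lt_trans u v w : node_lt X u v -> node_lt X v w -> node_lt X u w.
Proof. exact: t_trans. Qed.

Lemma pre_node_lt k c : pre X k c -> node_lt X (inl c) (inr k).
Proof. by move=> H; apply: t_step. Qed.

Lemma post_node_lt k c : post X k c -> node_lt X (inr k) (inl c).
Proof. by move=> H; apply: t_step. Qed.

Lemma post_pre_ev_lt g h c : post X g c -> pre X h c -> ev_lt X g h.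
Proof. by move=> /post_node_lt H1 /pre_node_lt; apply: node_lt_trans. Qed.

Lemma ev_le_trans a b c : ev_le X a b -> ev_le X b c -> ev_le X a c.
Proof.
by move=> [->|H1] // [<-|H2]; [right | right; apply: node_lt_trans H1 H2].
Qed.

Lemma ev_lt_le_trans a b c : ev_lt X a b -> ev_le X b c -> ev_lt X a c.
Proof. by move=> H1 [<-|H2] //; apply: node_lt_trans H1 H2. Qed.

Lemma produced_after_le e e' c : ev_le X e e' -> produced_after e' c -> produced_after e c.
Proof. by move=> le [g [cg le']]; exists g; split=> //; apply: ev_le_trans le le'. Qed.

(* [P] lists the events fired so far and [M] is the current marking. *)
Definition fired_inv (P : seq nat) (M : cond n -> Prop) :=
 [/\ (forall c g, M c -> c.1 = Some g -> g \in P),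
     (forall j, exists c, M c /\ c.2 = j),
     (forall c c', M c -> M c' -> c.2 = c'.2 -> c = c') &
     (forall c f0, M c -> f0 \in P -> participates f0 c.2 -> produced_after f0 c)].

Lemma fired_inv_init : fired_inv [::] (@init_mark n).
Proof.
split=> //.
- by move=> c g; rewrite /init_mark => ->.
- by move=> j; exists (None, j).
- by move=> c c' E1 E2; apply: cond_ext; rewrite E1 E2.
Qed.

Lemma fired_inv_ev_le P M k f0 j : fired_inv P M -> (forall c, pre X k c -> M c) ->
  f0 \in P -> participates f0 j -> participates k j -> ev_le X f0 k.
Proof.
move=> [_ _ _ Hafter] HM f0P f0j /participates_pre [c [pc c2]].
have := Hafter c f0 (HM _ pc) f0P; rewrite c2 => /(_ f0j) [g [cg le]].
have [c1|[q [cq [_ pq]]]] := pre_origin pc; first by rewrite c1 in cg.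
rewrite cg in cq; case: cq => <- in pq.
by apply: ev_le_trans le _; right; apply: post_pre_ev_lt pq pc.
Qed.

Lemma fired_inv_fire P M k : fired_inv P M -> k \notin P -> (forall c, pre X k c -> M c) ->
  fired_inv (rcons P k) (fun c => (M c /\ ~ pre X k c) \/ post X k c).
Proof.
move=> HI kP HM; have [Hprod Hcover Huniq Hafter] := HI.
have kept_new c c' : M c -> ~ pre X k c -> post X k c' -> c.2 <> c'.2.
  move=> Mc npc /post_participates /participates_pre [c'' [pc'' <-]] E.
  by apply: npc; rewrite (Huniq c c'' Mc (HM _ pc'')).
split.
- move=> c g [[Mc _]|pc] cg; rewrite mem_rcons inE; first by rewrite (Hprod _ _ Mc cg) orbT.
  by move: cg; rewrite (post_fst pc) => -[->]; rewrite eqxx.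
- move=> j; case: (classic (participates k j)) => kj.
    by exists (Some k, j); split=> //; right; apply: participates_post.
  have [c [Mc c2]] := Hcover j; exists c; split=> //; left; split=> // /pre_participates.
  by rewrite c2.
- move=> c c' [[Mc npc]|pc] [[Mc' npc']|pc'] E.
  + exact: Huniq.
  + by case: (kept_new _ _ Mc npc pc' E).
  + by case: (kept_new _ _ Mc' npc' pc (esym E)).
  + by apply: cond_ext => //; rewrite (post_fst pc) (post_fst pc').
- move=> c f0 [[Mc npc]|pc]; rewrite mem_rcons inE => /orP f0P f0c.
  + case: f0P => [/eqP f0k|f0P]; last exact: Hafter Mc f0P f0c.
    subst f0; have [c'' [pc'' c2]] := participates_pre f0c.
    by case: npc; rewrite (Huniq c c'' Mc (HM _ pc'')) // c2.
  + exists k; split; first exact: post_fst.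
    case: f0P => [/eqP ->|f0P]; first by left.
    exact: fired_inv_ev_le HI HM f0P f0c (post_participates pc).
Qed.

Lemma uniq_fire (P : seq nat) k s : uniq (P ++ k :: s) -> k \notin P /\ uniq (rcons P k ++ s).
Proof.
move=> Hu; rewrite cat_rcons; split=> //.
by move: Hu; rewrite cat_uniq => /and3P [_ /hasPn H _]; apply: H; rewrite inE eqxx.
Qed.

Lemma fires_fired_inv M s M' : fires X M s M' ->
  forall P, uniq (P ++ s) -> fired_inv P M -> fired_inv (P ++ s) M'.
Proof.
elim=> {M s M'} [M0|M0 k s M1 _ HM _ IH] P; first by rewrite cats0.
move=> /uniq_fire [kP Hu] HI; rewrite -cat_rcons.
exact: IH Hu (fired_inv_fire HI kP HM).
Qed.

Lemma fires_mark M s M' : fires X M s M' ->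
  forall P, uniq (P ++ s) -> fired_inv P M ->
  forall c, M' c <-> (M c \/ exists k, k \in s /\ post X k c) /\
                     ~ exists k, k \in s /\ pre X k c.
Proof.
elim=> {M s M'} [M0|M0 k s M1 _ HM _ IH] P.
  move=> _ _ c; split; first by move=> H; split; [left | case=> ? []].
  by case=> [[//|[? []]]].
move=> Hu0 HI; have [kP Hu] := uniq_fire Hu0.
have [Hprod _ _ _] := HI.
(* a condition consumed by [k] was produced by an event fired before [k] *)
have not_later k' c : k' \in s -> post X k' c -> ~ pre X k c.
  move=> k's pc' pc; have := Hprod _ _ (HM _ pc) (post_fst pc').
  move: Hu0; rewrite cat_uniq => /and3P [_ /hasPn H _].
  by move: (H k'); rewrite inE k's orbT => /(_ isT) /negbTE ->.
have not_own c : post X k c -> ~ pre X k c.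
  move=> pc /pre_origin; rewrite (post_fst pc).
  by case=> [//|[q [[<-] [lt _]]]]; rewrite ltnn in lt.
move=> c; rewrite (IH _ Hu (fired_inv_fire HI kP HM)); split.
- move=> [H1 H2]; split.
    case: H1 => [[[Mc _]|pc]|[k' [ks pc]]]; first by left.
      by right; exists k; rewrite mem_head.
    by right; exists k'; rewrite inE ks orbT.
  move=> [k' [+ pc]]; rewrite inE => /orP [/eqP Ek|ks]; last by apply: H2; exists k'.
  subst k'; case: H1 => [[[_ npc]|pc']|[k'' [ks pc']]]; first exact: npc.
    exact: not_own pc' pc.
  exact: not_later ks pc' pc.
- move=> [H1 H2]; split.
    case: H1 => [Mc|[k' [+ pc]]].
      by left; left; split=> // pc; apply: H2; exists k; rewrite mem_head.
    rewrite inE => /orP [/eqP Ek|ks]; first by subst k'; left; right.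
    by right; exists k'.
  by move=> [k' [ks pc]]; apply: H2; exists k'; rewrite inE ks orbT.
Qed.

Lemma fires_ev_le M s M' : fires X M s M' ->
  forall P, uniq (P ++ s) -> fired_inv P M ->
  forall p f0 j, p \in s -> f0 \in P -> participates f0 j -> participates p j ->
    ev_le X f0 p.
Proof.
elim=> {M s M'} [M0|M0 k s M1 _ HM _ IH] P; first by move=> _ _ p f0 j; rewrite in_nil.
move=> /uniq_fire [kP Hu] HI p f0 j; rewrite inE => /orP [/eqP ->|ps] f0P.
  exact: fired_inv_ev_le HI HM f0P.
by apply: (IH _ Hu (fired_inv_fire HI kP HM) p f0 j ps); rewrite mem_rcons inE f0P orbT.
Qed.

Lemma fires_consume M s M' : fires X M s M' ->
  forall P, uniq (P ++ s) -> fired_inv P M ->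
  forall h c p, h \in s -> pre X h c -> p \in P ++ s -> participates p c.2 ->
    ev_le X h p \/ produced_after p c.
Proof.
elim=> {M s M'} [M0|M0 k s M1 _ HM Hf IH] P; first by move=> _ _ h c p; rewrite in_nil.
move=> Hu0 HI; have [kP Hu] := uniq_fire Hu0.
have HI1 := fired_inv_fire HI kP HM.
move=> h c p; rewrite inE => /orP [/eqP ->|hs] pc; last first.
  by rewrite -cat_rcons; apply: IH.
rewrite mem_cat inE => /orP [pP|/orP [/eqP ->|ps]] pp.
- by right; have [_ _ _ Hafter] := HI; apply: Hafter pP pp; apply: HM.
- by left; left.
- left; apply: fires_ev_le Hf _ Hu HI1 _ _ _ ps _ (pre_participates pc) pp.
  by rewrite mem_rcons mem_head.
Qed.

(* The marking [M(e)], described without reference to a firing sequence. *)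
Definition cut_mark (e : nat) (c : cond n) :=
  (c.1 = None \/ exists k, ev_le X k e /\ post X k c) /\
  ~ exists k, ev_le X k e /\ pre X k c.

Definition cut_coherent (e : nat) :=
 [/\ (forall j, exists c, cut_mark e c /\ c.2 = j),
     (forall c c', cut_mark e c -> cut_mark e c' -> c.2 = c'.2 -> c = c'),
     (forall c f0, cut_mark e c -> ev_le X f0 e -> participates f0 c.2 ->
        produced_after f0 c) &
     (forall h c p, ev_le X h e -> pre X h c -> ev_le X p e -> participates p c.2 ->
        ev_le X h p \/ produced_after p c)].

Lemma marking_ofP e M : marking_of X e M ->
  cut_coherent e /\ forall c, M c <-> cut_mark e c.
Proof.
case=> s [us [Hs Hf]].
have HI0 := fired_inv_init; have us0 : uniq ([::] ++ s) by [].
have [_ Hcover Huniq Hafter] := fires_fired_inv Hf us0 HI0.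
have EM c : M c <-> cut_mark e c.
  have in_cone (Q : nat -> Prop) :
      (exists k, k \in s /\ Q k) <-> (exists k, ev_le X k e /\ Q k).
    by split=> -[k [Hk Qk]]; exists k; rewrite Hs in Hk *.
  by rewrite (fires_mark Hf us0 HI0) /cut_mark /init_mark !in_cone.
split=> //; split.
- by move=> j; have [c [Mc c2]] := Hcover j; exists c; rewrite -EM.
- by move=> c c' /EM Mc /EM Mc'; apply: Huniq.
- by move=> c f0 /EM Mc /Hs f0s; apply: Hafter.
- by move=> h c p /Hs hs pc /Hs ps; apply: (fires_consume Hf us0 HI0).
Qed.

Lemma cut_mark_post e c g : cut_mark e c -> c.1 = Some g -> post X g c /\ ev_le X g e.
Proof.
by case=> [[->//|[k [le pk]]] _]; rewrite (post_fst pk) => -[<-].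
Qed.

Lemma node_lt_cross (F : node n -> Prop) u v : node_lt X u v -> ~ F u -> F v ->
  exists x y, Defs.arc X x y /\ ~ F x /\ F y /\ (x = u \/ node_lt X u x) /\
              (y = v \/ node_lt X y v).
Proof.
elim=> {u v} [u v H nFu Fv|u w v H1 IH1 H2 IH2 nFu Fv].
  by exists u, v; do 4 (split=> //; try by left).
case: (classic (F w)) => Fw.
  have [x [y [a [nx [Fy [xu yw]]]]]] := IH1 nFu Fw.
  exists x, y; do 4 split=> //; right.
  by case: yw => [->//|yw]; apply: node_lt_trans yw H2.
have [x [y [a [nx [Fy [xw yv]]]]]] := IH2 Fw Fv.
exists x, y; do 4 split=> //; right.
by case: xw => [->//|xw]; apply: node_lt_trans H1 xw.
Qed.

Lemma node_lt_cond u c : node_lt X u (inl c) ->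
  exists k, post X k c /\ (u = inr k \/ node_lt X u (inr k)).
Proof.
move E: (inl c) => v H; elim: H c E => {u v} [u v a|u w v H1 _ H2 IH2] c E.
  by subst v; case: u a => [c'|k] //= a; exists k; split=> //; left.
have [k [pk wk]] := IH2 _ E; exists k; split=> //; right.
by case: wk => [<-//|wk]; apply: node_lt_trans H1 wk.
Qed.

Definition node_ge (e : nat) (x : node n) := inr e = x \/ node_lt X (inr e) x.

Lemma node_ge_ev k e : node_ge e (inr k) <-> ev_le X e k.
Proof. by split=> [[[->]|H]|[->|H]]; [left | right | left | right]. Qed.

Lemma node_ge_cond e c : node_ge e (inl c) <->
  exists k, post X k c /\ ev_le X e k.
Proof.
split=> [[E|/node_lt_cond [k [pk ek]]]|[k [pk ek]]]; first discriminate.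
  by exists k; split=> //; apply/node_ge_ev; exact: ek.
right; case: ek => [->|ek]; first exact: post_node_lt pk.
exact: node_lt_trans ek (post_node_lt pk).
Qed.

Lemma cone_entry e g k : ~ ev_le X e g -> ev_lt X g k -> ev_le X e k ->
  exists c h, [/\ pre X h c, node_lt X (inr g) (inl c), ~ produced_after e c,
                  ev_le X e h & ev_le X h k].
Proof.
move=> ng gk ek.
have [x [y [a [nFx [Fy [gx yk]]]]]] :=
  node_lt_cross (F := node_ge e) gk (fun H => ng (proj1 (node_ge_ev _ _) H))
    (proj2 (node_ge_ev _ _) ek).
case: x y a nFx Fy gx yk => [c|k'] [c'|h] //= a nFx Fy gx yk.
- exists c, h; split=> //; first by case: gx.
  + move=> [q [cq eq]]; apply: nFx; apply/node_ge_cond; exists q; split=> //.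
    have [c1|[q' [cq' [_ pq']]]] := pre_origin a; first by rewrite c1 in cq.
    by rewrite cq in cq'; case: cq' => ->.
  + exact/node_ge_ev.
  + by case: yk => [[->]|H]; [left|right].
- case: nFx; apply/node_ge_ev; move/node_ge_cond: Fy => [q [pq eq]].
  by move: (post_fst pq); rewrite (post_fst a) => -[->].
Qed.

Lemma strong_cause_no_marking e' e : ev_lt X e' e ->
  ~ (exists M, marking_of X e M) -> strong_cause X e' e.
Proof. by move=> lt nM; split=> // M M' HM; case: nM; exists M. Qed.

Section Chain.
Variable f : nat -> nat.
Hypothesis Hchain : forall i, ev_lt X (f i) (f i.+1).

Lemma chain_ev_lt i j : i < j -> ev_lt X (f i) (f j).
Proof.
elim: j => [//|j IH]; rewrite ltnS leq_eqVlt => /orP [/eqP ->//|ij].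
exact: node_lt_trans (IH ij) (Hchain j).
Qed.

Lemma chain_ev_le i j : i <= j -> ev_le X (f i) (f j).
Proof. by rewrite leq_eqVlt => /orP [/eqP ->|/chain_ev_lt]; [left|right]. Qed.

Lemma ev_le_chain k i j : ev_le X k (f i) -> i <= j -> ev_le X k (f j).
Proof. by move=> H ij; apply: ev_le_trans H (chain_ev_le ij). Qed.

Lemma cut_mark_between i a b c : i <= a -> a <= b ->
  cut_mark (f i) c -> cut_mark (f b) c -> cut_mark (f a) c.
Proof.
move=> ia ab [Hprod _] [_ Hcons]; split.
  case: Hprod => [->|[k [le pk]]]; [by left | right; exists k; split=> //].
  exact: ev_le_chain le ia.
by case=> k [le pk]; apply: Hcons; exists k; split=> //; apply: ev_le_chain le ab.
Qed.

Lemma cut_mark_consumed i j c : i <= j -> cut_mark (f i) c -> ~ cut_mark (f j) c ->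
  exists h, ev_le X h (f j) /\ pre X h c.
Proof.
move=> ij [Hprod _] nM; apply: NNPP => nE; apply: nM; split=> //.
case: Hprod => [->|[k [le pk]]]; [by left | right; exists k; split=> //].
exact: ev_le_chain le ij.
Qed.

Lemma cut_mark_new i j c : i <= j -> cut_mark (f j) c -> ~ cut_mark (f i) c ->
  exists g, [/\ c.1 = Some g, post X g c, ev_le X g (f j) & ~ ev_le X g (f i)].
Proof.
move=> ij [Hprod Hcons] nM.
have Hcons' : ~ exists k, ev_le X k (f i) /\ pre X k c.
  by case=> k [le pk]; apply: Hcons; exists k; split=> //; apply: ev_le_chain le ij.
case: Hprod => [c1|[g [le pg]]]; first by case: nM; split; [left|].
exists g; split=> //; first exact: post_fst pg.
by move=> gi; apply: nM; split=> //; right; exists g.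
Qed.

Hypothesis Hcut : forall m, cut_coherent (f m).

Lemma cut_cover m l : exists c, cut_mark (f m) c /\ c.2 = l.
Proof. by have [cover _ _ _] := Hcut m; apply: cover. Qed.

Lemma cut_uniq m c c' : cut_mark (f m) c -> cut_mark (f m) c' -> c.2 = c'.2 -> c = c'.
Proof. by have [_ uniq _ _] := Hcut m; apply: uniq. Qed.

Definition changes (l : 'I_n) a b :=
  exists c, [/\ cut_mark (f a) c, c.2 = l & ~ cut_mark (f b) c].

Definition changes_often l := forall i, exists a b, [/\ i <= a, a <= b & changes l a b].

Lemma changes_from l i a b : i <= a -> a <= b -> changes l a b -> changes l i b.
Proof.
move=> ia ab [c [Ma c2 nMb]].
have [c0 [M0 c02]] := cut_cover i l; exists c0; split=> // Mb.
apply: nMb; rewrite -(cut_uniq (cut_mark_between ia ab M0 Mb) Ma) //.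
by rewrite c02 c2.
Qed.

Lemma changes_stop : exists N, forall l,
  changes_often l \/ forall a b, N <= a -> a <= b -> ~ changes l a b.
Proof.
apply: finite_upper_bound => [l|l N N' NN' [H|H]]; [|by left|].
  case: (classic (changes_often l)) => Hl; first by exists 0; left.
  have [i Hi] := not_all_ex_not _ _ Hl; exists i; right => a b ia ab ch.
  by apply: Hi; exists a, b.
by right => a b N'a; apply: H; apply: leq_trans N'a.
Qed.

Lemma often_changing_consumed i : exists K, i < K /\ forall c,
  changes_often c.2 -> cut_mark (f i) c -> exists h, ev_le X h (f K) /\ pre X h c.
Proof.
pose P l K := changes_often l -> forall c, cut_mark (f i) c -> c.2 = l ->
  exists h, ev_le X h (f K) /\ pre X h c.
have [K HK] : exists K, forall l, P l K.
  apply: finite_upper_bound => [l|l K K' KK' H Hl c Mc c2]; last first.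
    by have [h [hK pc]] := H Hl c Mc c2; exists h; split=> //; apply: ev_le_chain hK KK'.
  case: (classic (changes_often l)) => Hl; last by exists 0.
  have [a [b [ia ab ch]]] := Hl i.
  have [c0 [M0 c02 nM0]] := changes_from ia ab ch.
  have [h [hb pc0]] := cut_mark_consumed (leq_trans ia ab) M0 nM0.
  exists b => _ c Mc c2; exists h; split=> //.
  by rewrite (cut_uniq Mc M0) // c2 c02.
exists (maxn K i.+1); split; first by rewrite leq_maxr.
move=> c Hl Mc; have [h [hK pc]] := HK _ Hl c Mc erefl.
by exists h; split=> //; apply: ev_le_chain hK (leq_maxl _ _).
Qed.

Definition renewed K m (l : 'I_n) :=
  exists c, [/\ cut_mark (f m) c, c.2 = l & produced_after (f K) c].

Lemma renewed_mono K m m' l : m <= m' -> renewed K m l -> renewed K m' l.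
Proof.
move=> mm' [c [Mc c2 [g [cg Kg]]]].
have [c' [Mc' c'2]] := cut_cover m' l.
case: (classic (cut_mark (f m) c')) => Mmc'.
  have E : c = c' by apply: cut_uniq Mc Mmc' _; rewrite c2 c'2.
  by subst c'; exists c; split=> //; exists g.
have nMc : ~ cut_mark (f m') c.
  by move=> M'c; apply: Mmc'; rewrite -(cut_uniq M'c Mc') // c2 c'2.
have [h [hm' pc]] := cut_mark_consumed mm' Mc nMc.
have [_ _ Hafter _] := Hcut m'.
have hc' : participates h c'.2 by rewrite c'2 -c2; apply: pre_participates pc.
exists c'; split=> //; apply: produced_after_le (Hafter _ _ Mc' hm' hc').
have [pg _] := cut_mark_post Mc cg.
by apply: ev_le_trans Kg _; right; apply: post_pre_ev_lt pg pc.
Qed.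

Lemma renewed_saturate K : exists m1, K <= m1 /\
  forall l, (exists m, renewed K m l) -> renewed K m1 l.
Proof.
have [M HM] : exists M, forall l, (exists m, renewed K m l) -> renewed K M l.
  apply: finite_upper_bound => [l|l M M' MM' H /H]; last exact: renewed_mono.
  by case: (classic (exists m, renewed K m l)) => [[m Hm]|Hn]; [exists m | exists 0].
exists (M + K); split=> [|l /HM]; first exact: leq_addl.
by apply: renewed_mono; apply: leq_addr.
Qed.

Section Saturated.
Variables K m1 : nat.
Hypothesis Km1 : K <= m1.
Hypothesis Hsat : forall l, (exists m, renewed K m l) -> renewed K m1 l.

(* A component whose condition is not renewed at [m1] never changes again:
   a later condition of it would come from an event outside the cone above
   [f K], and the causal path from that event into the cone would pass
   through a component that is renewed at [m1]. *)
Lemma cut_mark_frozen m c : m1 <= m -> cut_mark (f m) c -> ~ renewed K m1 c.2 ->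
  cut_mark (f m1) c.
Proof.
move=> m1m Mc nren; apply: NNPP => nM1c.
have [g [cg pg gm ngm1]] := cut_mark_new m1m Mc nM1c.
have Km := leq_trans Km1 m1m.
have nKg : ~ ev_le X (f K) g.
  by move=> Kg; apply: nren; apply: Hsat; exists m, c; split=> //; exists g.
have gm_lt : ev_lt X g (f m).
  by case: gm => [gfm|//]; case: nKg; rewrite gfm; apply: chain_ev_le.
have [c0 [h [pc0 gc0 nKc0 Kh hm]]] := cone_entry nKg gm_lt (chain_ev_le Km).
have [_ _ Hafter Hconsume] := Hcut m.
have [c'' [Mc'' c''2]] := cut_cover m c0.2.
have hc'' : participates h c''.2 by rewrite c''2; apply: pre_participates pc0.
have [c1 [Mc1 c12 [p [c1p Kp]]]] : renewed K m1 c0.2.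
  apply: Hsat; exists m, c''; split=> //.
  exact: produced_after_le Kh (Hafter _ _ Mc'' hm hc'').
have [pp pm1] := cut_mark_post Mc1 c1p.
have pc02 : participates p c0.2 by rewrite -c12; apply: post_participates pp.
case: (Hconsume h c0 p hm pc0 (ev_le_chain pm1 m1m) pc02) => [hp|pc0p].
  apply: ngm1; right; apply: ev_lt_le_trans _ (ev_le_trans hp pm1).
  exact: node_lt_trans gc0 (pre_node_lt pc0).
exact: nKc0 (produced_after_le Kp pc0p).
Qed.

Lemma changes_often_renewed l : changes_often l -> renewed K m1 l.
Proof.
move=> Hl; have [a [b [m1a ab ch]]] := Hl m1.
have [c1 [Mc1 c12 nMbc1]] := changes_from m1a ab ch.
apply: NNPP => nren.
have [c [Mbc c2]] := cut_cover b l.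
have nren' : ~ renewed K m1 c.2 by rewrite c2.
have M1c := cut_mark_frozen (leq_trans m1a ab) Mbc nren'.
by apply: nMbc1; rewrite -(cut_uniq M1c Mc1) // c2 c12.
Qed.

End Saturated.

Lemma eventually_strong_cause : exists N, forall i, N <= i ->
  exists i', i < i' /\ strong_cause X (f i) (f i').
Proof.
have [N HN] := changes_stop; exists N => i Ni.
have [K [iK Hconsumed]] := often_changing_consumed i.
have [m1 [Km1 Hsat]] := renewed_saturate K.
have im1 := leq_trans iK Km1.
have often c : cut_mark (f i) c -> ~ cut_mark (f m1) c -> changes_often c.2.
  move=> Mic nMc; case: (HN c.2) => // Hstop.
  by case: (Hstop i m1 Ni (ltnW im1)); exists c.
exists m1; split=> //; split; first exact: chain_ev_lt.
move=> M M' /marking_ofP [_ EM] /marking_ofP [_ EM'] b b' /EM Mb nM'b /EM' M'b' nMb'.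
have nMib : ~ cut_mark (f i) b by move/EM'.
have nM1b' : ~ cut_mark (f m1) b' by move/EM.
have [h [hK pb']] := Hconsumed b' (often _ M'b' nM1b') M'b'.
have [c0 [Mic0 c02]] := cut_cover i b.2.
have nMc0 : ~ cut_mark (f m1) c0.
  by move=> M1c0; apply: nMib; rewrite -(cut_uniq M1c0 Mb) // c02.
have [c [M1c c2 [g [cg Kg]]]] := changes_often_renewed Km1 Hsat (often _ Mic0 nMc0).
have cb : c = b by apply: cut_uniq M1c Mb _; rewrite c2 c02.
subst c; have [pg _] := cut_mark_post Mb cg.
apply: node_lt_trans (pre_node_lt pb') _.
case: (ev_le_trans hK Kg) => [->|hg]; first exact: post_node_lt pg.
exact: node_lt_trans hg (post_node_lt pg).
Qed.

End Chain.
End BranchingProcess.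

Theorem lemma1 (Act : finType) (n : nat) (A : 'I_n -> LTS Act)
    (X : nat -> option (event A)) :
  is_branching_process X ->
  forall f : nat -> nat,
    (forall i, is_event X (f i)) ->
    (forall i, ev_lt X (f i) (f i.+1)) ->
    exists g : nat -> nat,
      (forall m, g m < g m.+1) /\
      (forall m, strong_cause X (f (g m)) (f (g m.+1))).
Proof.
move=> HBP f _ Hchain.
(* the chain hypothesis already forces each [f i] to be an event *)
case: (classic (exists N0, forall m, N0 <= m -> exists M, marking_of X (f m) M))
  => [[N0 HN0]|Hnone].
  pose f' m := f (m + N0).
  have Hchain' i : ev_lt X (f' i) (f' i.+1) by rewrite /f' addSn.
  have Hcut' m : cut_coherent X (f' m).
    by have [M /marking_ofP []] := HN0 (m + N0) (leq_addl _ _).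
  have [N HN] := eventually_strong_cause HBP Hchain' Hcut'.
  have [g' [g'_incr g'_sc]] := increasing_chain HN.
  by exists (fun m => g' m + N0); split=> m; [rewrite ltn_add2r | apply: g'_sc].
(* infinitely many [f m] have no marking, and then [strong_cause] holds vacuously *)
apply: (@increasing_chain (fun i j => strong_cause X (f i) (f j)) 0) => i _.
have [m [im nM]] : exists m, i < m /\ ~ exists M, marking_of X (f m) M.
  apply: NNPP => H; apply: Hnone; exists i.+1 => m im.
  by apply: NNPP => nM; apply: H; exists m.
by exists m; split=> //; apply: strong_cause_no_marking (chain_ev_lt Hchain im) nM.
Qed.
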